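(* Let $H=(V,E)$ be a finite hypergraph whose edges are non-empty and pairwise disjoint and whose union is $V$ (so every vertex has degree exactly 1; edges of size 1 are allowed). If both $|V|$ and $|E|$ are even and $|V|\not\equiv |E|\pmod 4$, then $H$ is not $\mathbb{Z}_2\times\mathbb{Z}_2$-cordial.
   Context: Let $A=\mathbb{Z}_2\times\mathbb{Z}_2$. For a hypergraph $H=(V,E)$ and a labeling $c:V\to A$, write $v_c(a)=|c^{-1}(a)|$; $c$ is $A$-friendly if $|v_c(a)-v_c(b)|\le 1$ for all $a,b\in A$. It induces $c^*:E\to A$, $c^*(e)=\sum_{v\in e}c(v)$; write $e_{c^*}(a)=|(c^* )^{-1}(a)|$. $H$ is $A$-cordial if it admits an $A$-friendly labeling $c$ with $|e_{c^*}(a)-e_{c^*}(b)|\le 1$ for all $a,b\in A$. *)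

From HB Require Import structures.
From mathcomp Require Import all_boot all_order all_algebra.
Set Implicit Arguments. Unset Strict Implicit. Unset Printing Implicit Defensive.
Import GRing.Theory.
Local Open Scope ring_scope.

Definition klein := ('Z_2 * 'Z_2)%type.

Definition close1 (m n : nat) : bool := ((m <= n.+1) && (n <= m.+1))%N.

Definition vcount (V : finType) (c : V -> klein) (a : klein) : nat :=
  #|[set v | c v == a]|.

Definition induced (V : finType) (c : V -> klein) (e : {set V}) : klein :=
  \sum_(v in e) c v.

Definition ecount (V : finType) (E : {set {set V}}) (c : V -> klein) (a : klein) : nat :=
  #|[set e in E | induced c e == a]|.

Definition friendly (V : finType) (c : V -> klein) : bool :=
  [forall a : klein, forall b : klein, close1 (vcount c a) (vcount c b)].

Definition cordial_labeling (V : finType) (E : {set {set V}}) (c : V -> klein) : Prop :=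
  friendly c /\ [forall a : klein, forall b : klein, close1 (ecount E c a) (ecount E c b)].

Definition A_cordial (V : finType) (E : {set {set V}}) : Prop :=
  exists c : V -> klein, cordial_labeling E c.

(* In Z_2 x Z_2, whose elements sum to 0 and where a + a = 0, the sum of a
   balanced labeling of an even number n of objects is 0 when n = 4k (each
   value occurs k times) and is the sum of two distinct elements, hence
   nonzero, when n = 4k + 2.  Since the edges partition V, the vertex labels
   and the induced edge labels have the same total, so |V| and |E| must agree
   modulo 4. *)

From mathcomp Require Import all_boot all_order all_algebra zify.
Set Implicit Arguments.
Unset Strict Implicit.
Unset Printing Implicit Defensive.

Import GRing.Theory.
Local Open Scope ring_scope.

Lemma big_klein (R : Type) (idx : R) (op : Monoid.com_law idx) (F : klein -> R) :
  \big[op/idx]_(a : klein) F a = op (op (op (F (0, 0)) (F (0, 1))) (F (1, 0))) (F (1, 1)).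
Proof.
transitivity (\big[op/idx]_(i : 'Z_2) \big[op/idx]_(j : 'Z_2) F (i, j)).
  by rewrite pair_bigA; apply: eq_bigr => -[].
rewrite /= !big_ord_recl !big_ord0 !Monoid.mulm1 Monoid.mulmA.
have -> : (ord0 : 'Z_2) = 0 by apply/val_inj.
by have -> : (lift ord0 ord0 : 'Z_2) = 1 by apply/val_inj.
Qed.

Lemma klein_addxx (a : klein) : a + a = 0.
Proof. by case: a => -[[|[|//]] ?] [[|[|//]] ?]; apply/eqP. Qed.

Lemma mulrn_odd (R : zmodType) (a : R) : a + a = 0 -> forall n, a *+ n = a *+ odd n.
Proof.
by move=> aa n; rewrite {1}(divn_eq n 2) mulrnDr mulnC mulrnA mulr2n aa mul0rn add0r modn2.
Qed.

Lemma klein_parity_sum_eq0 (b1 b2 b3 b4 : bool) : ~~ odd (b1 + b2 + b3 + b4) ->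
  ((0, 0) *+ b1 + (0, 1) *+ b2 + (1, 0) *+ b3 + (1, 1) *+ b4 == 0 :> klein)
    = [&& b1 == b2, b2 == b3 & b3 == b4].
Proof. by case: b1; case: b2; case: b3; case: b4. Qed.

Section FibreCounting.
Variables (X A : finType) (S : {set X}) (g : X -> A).

Lemma card_by_fibres : #|S| = (\sum_(a : A) #|[set x in S | g x == a]|)%N.
Proof.
rewrite -sum1_card (partition_big g predT) //; apply: eq_bigr => a _.
by rewrite -sum1_card; apply: eq_bigl => x; rewrite !inE.
Qed.

Lemma sum_by_fibres (R : nmodType) (F : A -> R) :
  \sum_(x in S) F (g x) = \sum_(a : A) F a *+ #|[set x in S | g x == a]|.
Proof.
rewrite (partition_big g predT) //; apply: eq_bigr => a _.
rewrite -sumr_const; apply: eq_big => x; first by rewrite !inE.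
by rewrite andbC => /andP[/eqP ->].
Qed.

End FibreCounting.

Lemma close4_dvd4 (n1 n2 n3 n4 : nat) :
  close1 n1 n2 -> close1 n1 n3 -> close1 n1 n4 ->
  close1 n2 n3 -> close1 n2 n4 -> close1 n3 n4 ->
  (4 %| n1 + n2 + n3 + n4)%N = [&& odd n1 == odd n2, odd n2 == odd n3 & odd n3 == odd n4].
Proof.
(* The counts lie in {m, m+1} for m their minimum, so the total is 4m plus
   the number of counts equal to m+1, which is at most 3. *)
rewrite /close1 => /andP[? ?] /andP[? ?] /andP[? ?] /andP[? ?] /andP[? ?] /andP[? ?].
lia.
Qed.

Lemma balanced_klein_sum_eq0 (X : finType) (S : {set X}) (g : X -> klein) :
  (forall a b, close1 #|[set x in S | g x == a]| #|[set x in S | g x == b]|) ->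
  ~~ odd #|S| -> (\sum_(x in S) g x == 0) = (4 %| #|S|)%N.
Proof.
move=> balanced evenS.
rewrite (sum_by_fibres S g id).
under eq_bigr do rewrite (mulrn_odd (klein_addxx _)).
rewrite (card_by_fibres S g) !big_klein in evenS *.
rewrite close4_dvd4 ?balanced // klein_parity_sum_eq0 //.
by rewrite !oddD !oddb -!oddD.
Qed.

Local Close Scope ring_scope.

Theorem proposition5 (V : finType) (E : {set {set V}}) :
  (forall e, e \in E -> e != set0) ->
  (forall e f, e \in E -> f \in E -> e != f -> [disjoint e & f]) ->
  cover E = [set: V] ->
  ~~ odd #|V| -> ~~ odd #|E| ->
  #|V| %% 4 != #|E| %% 4 ->
  ~ A_cordial E.
Proof.
(* The edges need not be nonempty. *)
move=> _ disjointE coverE evenV evenE neqVE [c [/forallP friendly_c /forallP cordial_c]].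
have balancedV a b :
    close1 #|[set v in [set: V] | c v == a]| #|[set v in [set: V] | c v == b]|.
  have fibreT a' : [set v in [set: V] | c v == a'] = [set v | c v == a'].
    by apply/setP => v; rewrite !inE.
  by rewrite !fibreT; apply: (forallP (friendly_c a)).
have balancedE a b : close1 (ecount E c a) (ecount E c b).
  exact: (forallP (cordial_c a)).
have sumVE : (\sum_(v in [set: V]) c v = \sum_(e in E) induced c e)%R.
  by rewrite -coverE big_trivIset //; apply/trivIsetP.
have := balanced_klein_sum_eq0 balancedV; rewrite cardsT => /(_ evenV).
rewrite sumVE (balanced_klein_sum_eq0 balancedE evenE) => dvd4VE.
by move/negP: neqVE; apply; lia.
Qed.
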